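(* Let $E$ be an $\mathbb{R}$-group, $X$ a locally compact (Hausdorff) space not reduced to one point, and $\mathcal{H}=(H_\varepsilon)_{\varepsilon\in E}$ a continuous absorptive action of $E$ on $X$ with center $\omega$. Then $\omega$ has a countable neighbourhood base consisting of compact elementary sets, and also a countable neighbourhood base consisting of open elementary sets.
   Context: An $\mathbb{R}$-group is an abelian group $E$ (operation written multiplicatively) whose underlying set is a subset of $\mathbb{R}$ containing all positive integers, such that: (RG1) with the natural order of $\mathbb{R}$, $E$ is a totally ordered group; (RG2) with the topology induced from $\mathbb{R}$, $E$ is a locally compact group; (RG3) there is a nonconstant continuous homomorphism $h:E\to\mathbb{R}_+^*$ such that for every $\alpha\in E$ the set $\{\varepsilon\in E:\varepsilon\ge\alpha\}$ is integrable for $h\cdot m$, $m$ a Haar measure on $E$. $e$ is the identity of $E$, $\varepsilon^{-1}$ the group inverse; inequalities refer to the order of $\mathbb{R}$. An action of $E$ on $X$ is a family $(H_\varepsilon)_{\varepsilon\in E}$ of bijections of $X$ with $H_\varepsilon\circ H_{\varepsilon'}=H_{\varepsilon\varepsilon'}$, $H_e=\mathrm{id}_X$; continuous if $(\varepsilon,x)\mapsto H_\varepsilon(x)$ is continuous on $E\times X$; absorptive if some $\omega\in X$ satisfies (ABS): for every neighbourhood $V$ of $\omega$ and every $x\in X$ there are a neighbourhood $U$ of $x$ and $\alpha\in E$ with $H_{\varepsilon^{-1}}(U)\subset V$ for all $\varepsilon\le\alpha$; this $\omega$ is unique and called the center. A set $T\subset X$ is balanced if $H_{\varepsilon^{-1}}(T)\subset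 T$ for all $\varepsilon\le e$; it is elementary if it is a balanced relatively compact neighbourhood of $\omega$. *)

From Stdlib Require Import Reals List.
From Stdlib Require Export Rtopology.
Open Scope R_scope.

Definition cont_on (E : R -> Prop) (f : R -> R) : Prop :=
  forall x, E x -> forall eps, eps > 0 -> exists delta, delta > 0 /\
    forall y, E y -> Rabs (y - x) < delta -> Rabs (f y - f x) < eps.

(* compactly supported continuous functions on E; values off E are irrelevant *)
Definition Cc (E : R -> Prop) (f : R -> R) : Prop :=
  cont_on E f /\
  exists K : R -> Prop, compact K /\ (forall x, K x -> E x) /\
    (forall x, E x -> ~ K x -> f x = 0).

Definition abelian_group_on (E : R -> Prop) (mul : R -> R -> R) (inv : R -> R) (e : R) : Prop :=
  E e /\
  (forall x y, E x -> E y -> E (mul x y)) /\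
  (forall x, E x -> E (inv x)) /\
  (forall x y z, E x -> E y -> E z -> mul (mul x y) z = mul x (mul y z)) /\
  (forall x y, E x -> E y -> mul x y = mul y x) /\
  (forall x, E x -> mul e x = x) /\
  (forall x, E x -> mul (inv x) x = e).

Definition RG1 (E : R -> Prop) (mul : R -> R -> R) : Prop :=
  forall x y z, E x -> E y -> E z -> x <= y -> mul x z <= mul y z.

Definition RG2 (E : R -> Prop) (mul : R -> R -> R) (inv : R -> R) : Prop :=
  (forall x y, E x -> E y -> forall eps, eps > 0 -> exists delta, delta > 0 /\
     forall x' y', E x' -> E y' -> Rabs (x' - x) < delta -> Rabs (y' - y) < delta ->
       Rabs (mul x' y' - mul x y) < eps) /\
  cont_on E inv /\
  (forall x, E x -> exists K : R -> Prop, compact K /\ (forall y, K y -> E y) /\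
     exists delta, delta > 0 /\ forall y, E y -> Rabs (y - x) < delta -> K y).

(* I is (the integral against) a Haar measure on E: a nonzero, positive,
   translation-invariant linear functional on Cc(E) (Riesz / Bourbaki). *)
Definition haar_functional (E : R -> Prop) (mul : R -> R -> R) (I : (R -> R) -> R) : Prop :=
  (forall f g, Cc E f -> (forall x, E x -> f x = g x) -> I f = I g) /\
  (forall f g, Cc E f -> Cc E g -> I (fun x => f x + g x) = I f + I g) /\
  (forall c f, Cc E f -> I (fun x => c * f x) = c * I f) /\
  (forall f, Cc E f -> (forall x, E x -> 0 <= f x) -> 0 <= I f) /\
  (exists f, Cc E f /\ I f <> 0) /\
  (forall a f, E a -> Cc E f -> I (fun x => f (mul a x)) = I f).

(* The closed set S of E is integrable for the measure h.m (h > 0 continuous)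
   iff the upper integral of 1_S h is finite; by outer regularity this means:
   some open U of E containing S has finite (h.m)-measure, i.e. the integrals
   I(phi h), phi in Cc(E), 0 <= phi <= 1_U, are bounded. *)
Definition integrable_hm (E : R -> Prop) (I : (R -> R) -> R) (h : R -> R)
  (S : R -> Prop) : Prop :=
  exists U : R -> Prop,
    (forall x, E x -> U x -> exists delta, delta > 0 /\
        forall y, E y -> Rabs (y - x) < delta -> U y) /\
    (forall x, E x -> S x -> U x) /\
    exists M, forall phi, Cc E phi ->
      (forall x, E x -> 0 <= phi x <= 1) ->
      (forall x, E x -> ~ U x -> phi x = 0) ->
      I (fun x => phi x * h x) <= M.

Definition RG3 (E : R -> Prop) (mul : R -> R -> R) : Prop :=
  exists h : R -> R,
    cont_on E h /\ (forall x, E x -> 0 < h x) /\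
    (forall x y, E x -> E y -> h (mul x y) = h x * h y) /\
    (exists x y, E x /\ E y /\ h x <> h y) /\
    exists I, haar_functional E mul I /\
      forall alpha, E alpha -> integrable_hm E I h (fun eps => E eps /\ eps >= alpha).

Definition R_group (E : R -> Prop) (mul : R -> R -> R) (inv : R -> R) (e : R) : Prop :=
  (forall n : nat, (1 <= n)%nat -> E (INR n)) /\
  abelian_group_on E mul inv e /\ RG1 E mul /\ RG2 E mul inv /\ RG3 E mul.

Definition is_topology {X : Type} (open : (X -> Prop) -> Prop) : Prop :=
  open (fun _ => True) /\
  (forall U V, open U -> open V -> open (fun x => U x /\ V x)) /\
  (forall F : (X -> Prop) -> Prop, (forall U, F U -> open U) ->
     open (fun x => exists U, F U /\ U x)).

Definition nbhd {X : Type} (open : (X -> Prop) -> Prop) (x : X) (V : X -> Prop) : Prop :=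
  exists O, open O /\ O x /\ forall y, O y -> V y.

Definition compact_in {X : Type} (open : (X -> Prop) -> Prop) (K : X -> Prop) : Prop :=
  forall F : (X -> Prop) -> Prop, (forall U, F U -> open U) ->
    (forall x, K x -> exists U, F U /\ U x) ->
    exists l : list (X -> Prop), (forall U, In U l -> F U) /\
      (forall x, K x -> exists U, In U l /\ U x).

Definition closure {X : Type} (open : (X -> Prop) -> Prop) (T : X -> Prop) : X -> Prop :=
  fun x => forall U, open U -> U x -> exists y, U y /\ T y.

Definition hausdorff {X : Type} (open : (X -> Prop) -> Prop) : Prop :=
  forall x y : X, x <> y -> exists U V, open U /\ open V /\ U x /\ V y /\
    forall z, ~ (U z /\ V z).

Definition locally_compact {X : Type} (open : (X -> Prop) -> Prop) : Prop :=
  forall x : X, exists K, compact_in open K /\ nbhd open x K.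

Definition action (E : R -> Prop) (mul : R -> R -> R) (e : R) {X : Type}
  (H : R -> X -> X) : Prop :=
  (forall eps, E eps -> (forall x y, H eps x = H eps y -> x = y) /\
                        (forall y, exists x, H eps x = y)) /\
  (forall eps eps' x, E eps -> E eps' -> H eps (H eps' x) = H (mul eps eps') x) /\
  (forall x, H e x = x).

Definition continuous_action (E : R -> Prop) {X : Type} (open : (X -> Prop) -> Prop)
  (H : R -> X -> X) : Prop :=
  forall eps x W, E eps -> open W -> W (H eps x) ->
    exists delta U, delta > 0 /\ open U /\ U x /\
      forall eps' x', E eps' -> Rabs (eps' - eps) < delta -> U x' -> W (H eps' x').

Definition ABS (E : R -> Prop) (inv : R -> R) {X : Type} (open : (X -> Prop) -> Prop)
  (H : R -> X -> X) (omega : X) : Prop :=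
  forall V x, nbhd open omega V ->
    exists U alpha, nbhd open x U /\ E alpha /\
      forall eps, E eps -> eps <= alpha -> forall y, U y -> V (H (inv eps) y).

Definition balanced (E : R -> Prop) (inv : R -> R) (e : R) {X : Type}
  (H : R -> X -> X) (T : X -> Prop) : Prop :=
  forall eps, E eps -> eps <= e -> forall x, T x -> T (H (inv eps) x).

Definition elementary (E : R -> Prop) (inv : R -> R) (e : R) {X : Type}
  (open : (X -> Prop) -> Prop) (H : R -> X -> X) (omega : X) (T : X -> Prop) : Prop :=
  balanced E inv e H T /\ compact_in open (closure open T) /\ nbhd open omega T.

(* The center is fixed by every [H b]: otherwise ABS at [omega], applied to a
   neighbourhood separating [omega] from [H b omega], yields a point lying in both.
   If [K] is a compact neighbourhood of [omega], ABS gives an open neighbourhood [O] of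
   [omega] and [al] with [H (inv eps) O] inside [K] for [eps <= al]; the points sent into
   [O] by some [H eps], [eps <= min al e], form an open balanced neighbourhood [T] of
   [omega] inside [K].  As a subset of R without least element, [E] has a coinitial
   sequence [a n <= e], and the preimages of [T] under [H (a n)] and their closures are
   the two bases: by compactness ABS holds uniformly on [K], so for large [n] these
   sets shrink into any prescribed neighbourhood of [omega]. *)

From Stdlib Require Import Reals Lra Lia List Classical ClassicalEpsilon
  FunctionalExtensionality PropExtensionality.
Open Scope R_scope.

Lemma cover_remove_set {X : Type} (F : (X -> Prop) -> Prop) (C : X -> Prop) :
  forall l, (forall U, In U l -> F U \/ U = C) ->
  exists l', (forall U, In U l' -> F U) /\
    forall x, ~ C x -> (exists U, In U l /\ U x) -> exists U, In U l' /\ U x.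
Proof.
  induction l as [|U l IH]; intros Hl.
  - exists nil. split; [intros U []|]. intros x _ [U [[] _]].
  - destruct IH as [l' [Hl' Hcov]]. { intros U' HU'. apply Hl. right. exact HU'. }
    destruct (Hl U (or_introl eq_refl)) as [FU | ->].
    + exists (U :: l'). split.
      * intros U' [<- | HU']; auto.
      * intros x nCx [U' [[<- | HU'] U'x]].
        -- exists U. split; [left|]; auto.
        -- destruct (Hcov x nCx) as [U'' [HU'' U''x]]; [exists U'; auto|].
           exists U''. split; [right|]; auto.
    + exists l'. split; [exact Hl'|].
      intros x nCx [U' [[<- | HU'] Ux]]; [contradiction|].
      apply Hcov; [exact nCx|]. exists U'. auto.
Qed.

Section Topology.

Context {X : Type} (open : (X -> Prop) -> Prop).
Hypothesis Htop : is_topology open.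

Lemma open_of_locally_open (P : X -> Prop) :
  (forall x, P x -> exists U, open U /\ U x /\ forall z, U z -> P z) -> open P.
Proof.
  intros HP. destruct Htop as [_ [_ Hunion]].
  replace P with (fun x => exists U, (open U /\ forall z, U z -> P z) /\ U x).
  - apply Hunion. intros U [HU _]. exact HU.
  - apply functional_extensionality; intro x; apply propositional_extensionality; split.
    + intros [U [[_ HUP] Ux]]. auto.
    + intros Px. destruct (HP x Px) as [U [HU [Ux HUP]]]. exists U. auto.
Qed.

Lemma subset_closure (T : X -> Prop) x : T x -> closure open T x.
Proof. intros Tx U _ Ux. exists x. auto. Qed.

Lemma closure_mono (S T : X -> Prop) x :
  (forall y, S y -> T y) -> closure open S x -> closure open T x.
Proof.
  intros HST Hx U HU Ux. destruct (Hx U HU Ux) as [y [Uy Sy]]. exists y. auto.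
Qed.

Lemma closure_idem (T : X -> Prop) x :
  closure open (closure open T) x -> closure open T x.
Proof.
  intros Hx U HU Ux. destruct (Hx U HU Ux) as [y [Uy Hy]]. exact (Hy U HU Uy).
Qed.

Lemma open_compl_closure (T : X -> Prop) : open (fun x => ~ closure open T x).
Proof.
  apply open_of_locally_open. intros x Hx.
  assert (HU : exists U, open U /\ U x /\ forall y, U y -> ~ T y).
  { apply NNPP. intro Hn. apply Hx. intros U HU Ux. apply NNPP. intro Hn'.
    apply Hn. exists U. repeat split; auto. intros y Uy Ty. apply Hn'. exists y. auto. }
  destruct HU as [U [HU [Ux HUT]]].
  exists U. repeat split; auto.
  intros z Uz Hz. destruct (Hz U HU Uz) as [y [Uy Ty]]. exact (HUT y Uy Ty).
Qed.

Lemma compact_of_closed_sub (K S : X -> Prop) :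
  compact_in open K -> open (fun x => ~ S x) -> (forall x, S x -> K x) ->
  compact_in open S.
Proof.
  intros HK HC HSK F HF HcovS.
  destruct (HK (fun U => F U \/ U = (fun x => ~ S x))) as [l [Hl HcovK]].
  - intros U [FU | ->]; auto.
  - intros x Kx. destruct (classic (S x)) as [Sx | nSx].
    + destruct (HcovS x Sx) as [U [FU Ux]]. exists U. auto.
    + exists (fun x => ~ S x). auto.
  - destruct (cover_remove_set F _ l Hl) as [l' [Hl' Hcov']].
    exists l'. split; [exact Hl'|].
    intros x Sx. apply Hcov'; auto.
Qed.

Lemma open_avoiding_list (x : X) :
  forall l : list (X -> Prop),
  (forall U, In U l -> exists V, open V /\ V x /\ forall z, ~ (U z /\ V z)) ->
  exists W, open W /\ W x /\ forall U, In U l -> forall z, ~ (U z /\ W z).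
Proof.
  destruct Htop as [Hfull [Hinter _]].
  induction l as [|U l IH]; intros Hl.
  - exists (fun _ => True). split; [exact Hfull|]. split; [exact I|]. intros U [].
  - destruct IH as [W [HW [Wx HWl]]]. { intros U' HU'. apply Hl. right. exact HU'. }
    destruct (Hl U (or_introl eq_refl)) as [V [HV [Vx HUV]]].
    exists (fun z => V z /\ W z). repeat split; auto.
    intros U' [<- | HU'] z [U'z [Vz Wz]].
    + exact (HUV z (conj U'z Vz)).
    + exact (HWl U' HU' z (conj U'z Wz)).
Qed.

Lemma closure_compact (K : X -> Prop) x :
  hausdorff open -> compact_in open K -> closure open K x -> K x.
Proof.
  intros Hhaus HK Hx. apply NNPP. intro nKx.
  set (F := fun U => open U /\ exists V, open V /\ V x /\ forall z, ~ (U z /\ V z)).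
  destruct (HK F) as [l [Hl Hcov]].
  - intros U [HU _]. exact HU.
  - intros y Ky. assert (Hyx : y <> x) by (intro; subst; contradiction).
    destruct (Hhaus y x Hyx) as [U [V [HU [HV [Uy [Vx HUV]]]]]].
    exists U. repeat split; auto. exists V. auto.
  - destruct (open_avoiding_list x l) as [W [HW [Wx HWl]]].
    { intros U HU. apply (Hl U HU). }
    destruct (Hx W HW Wx) as [y [Wy Ky]].
    destruct (Hcov y Ky) as [U [HU Uy]].
    exact (HWl U HU y (conj Uy Wy)).
Qed.

End Topology.

Lemma inf_approx (E : R -> Prop) :
  (exists a, E a) -> (exists l, forall x, E x -> l <= x) ->
  exists m, (forall x, E x -> m <= x) /\
    forall k : nat, exists x, E x /\ x < m + / INR (S k).
Proof.
  intros [a0 Ea0] [l Hl].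
  set (negE := fun y => E (- y)).
  assert (Hbound : bound negE)
    by (exists (- l); intros y Hy; specialize (Hl _ Hy); lra).
  assert (Hinhab : exists y, negE y)
    by (exists (- a0); unfold negE; rewrite Ropp_involutive; exact Ea0).
  destruct (completeness negE Hbound Hinhab) as [m [Hub Hleast]].
  exists (- m). split.
  - intros x Ex.
    assert (Hx : negE (- x)) by (unfold negE; rewrite Ropp_involutive; exact Ex).
    specialize (Hub _ Hx). lra.
  - intros k. apply NNPP. intro Hn.
    assert (Hk : 0 < / INR (S k)) by (apply Rinv_0_lt_compat, lt_0_INR; lia).
    enough (m <= m - / INR (S k)) by lra.
    apply Hleast. intros y Hy.
    apply Rnot_lt_le. intro Hlt. apply Hn. exists (- y). split; [exact Hy | lra].
Qed.

Lemma coinitial_seq (E : R -> Prop) :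
  (exists a, E a) -> (forall a, E a -> exists b, E b /\ b < a) ->
  exists b : nat -> R, (forall n, E (b n)) /\ forall a, E a -> exists n, b n <= a.
Proof.
  intros Hinhab Hnomin.
  destruct (classic (exists l, forall x, E x -> l <= x)) as [Hbnd | Hunb].
  - destruct (inf_approx E Hinhab Hbnd) as [m [Hm Happrox]].
    destruct (choice _ Happrox) as [b Hb].
    exists b. split; [intros k; apply Hb|].
    intros a Ea. destruct (Hnomin a Ea) as [c [Ec Hca]].
    pose proof (Hm c Ec).
    destruct (archimed_cor1 (a - m)) as [N [HN HN0]]; [lra|].
    exists (pred N). destruct (Hb (pred N)) as [_ HbN].
    replace (S (pred N)) with N in HbN by lia. lra.
  - assert (Hlow : forall n : nat, exists x, E x /\ x <= - INR n).
    { intros n. apply NNPP. intro Hn. apply Hunb. exists (- INR n).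
      intros x Ex. apply Rnot_lt_le. intro Hlt. apply Hn. exists x. split; [exact Ex | lra]. }
    destruct (choice _ Hlow) as [b Hb].
    exists b. split; [intros n; apply Hb|].
    intros a Ea. destruct (INR_unbounded (- a)) as [n Hn]. exists n.
    destruct (Hb n) as [_ Hbn]. lra.
Qed.

Lemma R_group_nontrivial E mul inv e : R_group E mul inv e -> exists c, E c /\ c <> e.
Proof.
  intros [Hnat _].
  destruct (Req_dec (INR 1) e) as [H1e | H1e].
  - exists (INR 2). split; [apply Hnat; auto|]. rewrite <- H1e. simpl. lra.
  - exists (INR 1). split; [apply Hnat; auto | exact H1e].
Qed.

Section RGroupAction.

Variables (E : R -> Prop) (mul : R -> R -> R) (inv : R -> R) (e : R).
Hypothesis G : abelian_group_on E mul inv e.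

Lemma E_e : E e.
Proof. destruct G as (He & _). exact He. Qed.

Lemma E_mul x y : E x -> E y -> E (mul x y).
Proof. destruct G as (_ & Hmul & _). auto. Qed.

Lemma E_inv x : E x -> E (inv x).
Proof. destruct G as (_ & _ & Hinv & _). auto. Qed.

#[local] Hint Resolve E_e E_mul E_inv : core.

Lemma mulA x y z : E x -> E y -> E z -> mul (mul x y) z = mul x (mul y z).
Proof. destruct G as (_ & _ & _ & HA & _). auto. Qed.

Lemma mulC x y : E x -> E y -> mul x y = mul y x.
Proof. destruct G as (_ & _ & _ & _ & HC & _). auto. Qed.

Lemma mul1g x : E x -> mul e x = x.
Proof. destruct G as (_ & _ & _ & _ & _ & H1 & _). auto. Qed.

Lemma mulVg x : E x -> mul (inv x) x = e.
Proof. destruct G as (_ & _ & _ & _ & _ & _ & HV). auto. Qed.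

Lemma mulg1 x : E x -> mul x e = x.
Proof. intros Ex. rewrite mulC by auto. apply mul1g. exact Ex. Qed.

Lemma mulgV x : E x -> mul x (inv x) = e.
Proof. intros Ex. rewrite mulC by auto. apply mulVg. exact Ex. Qed.

Lemma mulgK x y : E x -> E y -> mul (mul x y) (inv y) = x.
Proof. intros Ex Ey. rewrite mulA, mulgV, mulg1 by auto. reflexivity. Qed.

Lemma mulIg x y z : E x -> E y -> E z -> mul x z = mul y z -> x = y.
Proof.
  intros Ex Ey Ez Hxy. rewrite <- (mulgK x z), <- (mulgK y z) by auto.
  rewrite Hxy. reflexivity.
Qed.

Lemma invMg x y : E x -> E y -> inv (mul x y) = mul (inv x) (inv y).
Proof.
  intros Ex Ey. apply (mulIg _ _ (mul x y)); auto.
  rewrite mulVg by auto.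
  rewrite (mulC x y), mulA, <- (mulA (inv y)), mulVg, mul1g, mulVg
    by auto.
  reflexivity.
Qed.

Lemma invgK x : E x -> inv (inv x) = x.
Proof.
  intros Ex. apply (mulIg _ _ (inv x)); auto.
  rewrite mulVg, mulgV by auto. reflexivity.
Qed.

Hypothesis Hord : RG1 E mul.

Lemma mul_le_e_r x d : E x -> E d -> d <= e -> mul x d <= x.
Proof.
  intros Ex Ed Hde. rewrite mulC by auto.
  rewrite <- (mul1g x) at 2 by exact Ex. apply Hord; auto.
Qed.

Lemma mul_inv_le x y b : E x -> E y -> E b -> x <= mul y b -> mul x (inv b) <= y.
Proof.
  intros Ex Ey Eb Hle. rewrite <- (mulgK y b) by auto.
  apply Hord; auto.
Qed.

Lemma exists_lt_e : (exists c, E c /\ c <> e) -> exists d, E d /\ d < e.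
Proof.
  intros [c [Ec Hce]].
  destruct (Rtotal_order c e) as [Hlt | [Heq | Hgt]]; [exists c; auto | contradiction |].
  exists (inv c). split; [apply E_inv; exact Ec|].
  apply Rnot_le_lt. intro Hle.
  pose proof (Hord e (inv c) c E_e (E_inv c Ec) Ec Hle) as Hh.
  rewrite mul1g, mulVg in Hh by auto. lra.
Qed.

Lemma no_least : (exists c, E c /\ c <> e) -> forall a, E a -> exists b, E b /\ b < a.
Proof.
  intros Hc a Ea. destruct (exists_lt_e Hc) as [d [Ed Hde]].
  exists (mul d a). split; [apply E_mul; auto|].
  destruct (Hord d e a Ed E_e Ea (Rlt_le _ _ Hde)) as [Hlt | Heq].
  - rewrite mul1g in Hlt by exact Ea. exact Hlt.
  - apply mulIg in Heq; auto. lra.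
Qed.

Context {X : Type} (open : (X -> Prop) -> Prop).
Hypothesis Htop : is_topology open.
Hypothesis Hhaus : hausdorff open.
Variable H : R -> X -> X.
Hypothesis Hact : action E mul e H.
Hypothesis Hcont : continuous_action E open H.

Lemma act_mul a b x : E a -> E b -> H a (H b x) = H (mul a b) x.
Proof. destruct Hact as (_ & Hcomp & _). auto. Qed.

Lemma actK a x : E a -> H (inv a) (H a x) = x.
Proof.
  destruct Hact as (_ & _ & He). intros Ea.
  rewrite act_mul, mulVg by auto. apply He.
Qed.

Lemma act_comm a b x : E a -> E b -> H a (H b x) = H b (H a x).
Proof. intros Ea Eb. rewrite !act_mul by auto. rewrite mulC by auto. reflexivity. Qed.

Lemma open_preimage_act a W : E a -> open W -> open (fun x => W (H a x)).
Proof.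
  intros Ea HW. apply (open_of_locally_open open Htop). intros x Wx.
  destruct (Hcont a x W Ea HW Wx) as [d [U [Hd [HU [Ux HUW]]]]].
  exists U. repeat split; auto. intros z Uz. apply HUW; auto.
  rewrite Rminus_diag, Rabs_R0. exact Hd.
Qed.

Lemma closure_act a (S T : X -> Prop) x :
  E a -> (forall y, S y -> T (H a y)) -> closure open S x -> closure open T (H a x).
Proof.
  intros Ea HST Hx U HU Ux.
  destruct (Hx _ (open_preimage_act a U Ea HU) Ux) as [y [Uy Sy]].
  exists (H a y). auto.
Qed.

Variable omega : X.
Hypothesis Habs : ABS E inv open H omega.

Lemma balanced_closure T : balanced E inv e H T -> balanced E inv e H (closure open T).
Proof.
  intros HT eps Eeps Hle x Hx.
  apply (closure_act _ T); auto.
Qed.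

Lemma elementary_closure T :
  elementary E inv e open H omega T ->
  compact_in open (closure open T) /\ elementary E inv e open H omega (closure open T).
Proof.
  intros [HTb [HTc [O [HO [Ow HOT]]]]].
  split; [exact HTc|]. split; [|split].
  - apply balanced_closure. exact HTb.
  - apply (compact_of_closed_sub open (closure open T));
      [exact HTc | apply (open_compl_closure open Htop) | apply closure_idem].
  - exists O. repeat split; auto. intros x Ox. apply subset_closure. auto.
Qed.

(* [H b (H (inv eps) omega)] is also [H (inv (eps * inv b)) omega], so for [eps] small
   ABS puts it both in [P] and in [Q]. *)
Lemma center_fixed b : E b -> H b omega = omega.
Proof.
  intros Eb. apply NNPP. intro Hmoved.
  destruct (Hhaus omega (H b omega)) as [P [Q [HP [HQ [Pw [Qb HPQ]]]]]]; [auto|].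
  set (V := fun z => P z /\ Q (H b z)).
  assert (HV : open V).
  { destruct Htop as [_ [Hinter _]].
    apply Hinter; [exact HP | apply open_preimage_act; auto]. }
  destruct (Habs V omega) as [U [al [[O [HO [Ow HOU]]] [Eal Hal]]]].
  { exists V. split; [exact HV|]. split; [split; auto | auto]. }
  set (eps := Rmin al (mul al b)).
  assert (Eeps : E eps) by (apply Rmin_case; auto).
  assert (Heps : mul eps (inv b) <= al)
    by (apply mul_inv_le; auto; apply Rmin_r).
  destruct (Hal eps Eeps (Rmin_l _ _) omega (HOU _ Ow)) as [_ HQ'].
  destruct (Hal (mul eps (inv b)) ltac:(auto)
              Heps omega (HOU _ Ow)) as [HP' _].
  apply (HPQ (H b (H (inv eps) omega))). split; [|exact HQ'].
  rewrite act_mul by auto.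
  rewrite invMg, invgK in HP' by auto.
  rewrite mulC by auto. exact HP'.
Qed.

Lemma ABS_uniform_on_list V :
  forall l : list (X -> Prop),
  (forall W, In W l -> exists al, E al /\ forall eps, E eps -> eps <= al ->
       forall y, W y -> V (H (inv eps) y)) ->
  exists al, E al /\ forall W, In W l -> forall eps, E eps -> eps <= al ->
       forall y, W y -> V (H (inv eps) y).
Proof.
  induction l as [|W l IH]; intros Hl.
  - exists e. split; [exact E_e | intros W []].
  - destruct IH as [al [Eal Hal]]. { intros W' HW'. apply Hl. right. exact HW'. }
    destruct (Hl W (or_introl eq_refl)) as [al0 [Eal0 Hal0]].
    exists (Rmin al0 al). split; [apply Rmin_case; assumption|].
    pose proof (Rmin_l al0 al). pose proof (Rmin_r al0 al).
    intros W' [<- | HW'] eps Eeps Hle y Wy.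
    + apply Hal0; auto. lra.
    + apply (Hal W'); auto. lra.
Qed.

Lemma ABS_uniform_on_compact K V :
  compact_in open K -> nbhd open omega V ->
  exists al, E al /\ forall eps, E eps -> eps <= al -> forall y, K y -> V (H (inv eps) y).
Proof.
  intros HK HV.
  set (F := fun W => open W /\ exists al, E al /\ forall eps, E eps -> eps <= al ->
       forall y, W y -> V (H (inv eps) y)).
  destruct (HK F) as [l [Hl Hcov]].
  - intros W [HW _]. exact HW.
  - intros x _. destruct (Habs V x HV) as [U [al [[O [HO [Ox HOU]]] [Eal Hal]]]].
    exists O. split; [|exact Ox]. split; [exact HO|].
    exists al. split; [exact Eal|]. intros eps Eeps Hle y Oy. apply Hal; auto.
  - destruct (ABS_uniform_on_list V l) as [al [Eal Hal]].
    { intros W HW. apply (Hl W HW). }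
    exists al. split; [exact Eal|]. intros eps Eeps Hle y Ky.
    destruct (Hcov y Ky) as [W [HW Wy]]. apply (Hal W HW); auto.
Qed.

Lemma open_balanced_nbhd_sub K :
  nbhd open omega K ->
  exists T, open T /\ balanced E inv e H T /\ T omega /\ forall x, T x -> K x.
Proof.
  intros HK.
  destruct (Habs K omega HK) as [U [al [[O [HO [Ow HOU]]] [Eal Hal]]]].
  set (al' := Rmin al e).
  assert (Eal' : E al') by (apply Rmin_case; auto).
  exists (fun x => exists eps, E eps /\ eps <= al' /\ O (H eps x)).
  split; [|split; [|split]].
  - apply (open_of_locally_open open Htop). intros x [eps [Eeps [Hle Ox]]].
    exists (fun z => O (H eps z)). split; [apply open_preimage_act; auto|].
    split; [exact Ox|]. intros z Oz. exists eps. auto.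
  - intros d Ed Hde x [eps [Eeps [Hle Ox]]].
    exists (mul eps d). split; [auto|]. split.
    + pose proof (mul_le_e_r eps d Eeps Ed Hde). lra.
    + rewrite act_mul, mulgK by auto. exact Ox.
  - exists al'. split; [exact Eal'|]. split; [lra|].
    rewrite center_fixed by exact Eal'. exact Ow.
  - intros x [eps [Eeps [Hle Ox]]].
    rewrite <- (actK eps x) by exact Eeps.
    apply Hal; [exact Eeps | | apply HOU; exact Ox].
    pose proof (Rmin_l al e). unfold al' in Hle. lra.
Qed.

Lemma elementary_of_sub_compact K T :
  compact_in open K -> balanced E inv e H T -> nbhd open omega T ->
  (forall x, T x -> K x) -> elementary E inv e open H omega T.
Proof.
  intros HK HTb HTw HTK. split; [exact HTb|]. split; [|exact HTw].
  apply (compact_of_closed_sub open K); [exact HK | apply (open_compl_closure open Htop)|].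
  intros x Hx. apply (closure_compact open Htop K x Hhaus HK).
  apply (closure_mono open T); assumption.
Qed.

Lemma preimage_open_elementary K T a :
  compact_in open K -> open T -> balanced E inv e H T -> T omega ->
  (forall x, T x -> K x) -> E a -> a <= e ->
  open (fun x => T (H a x)) /\ elementary E inv e open H omega (fun x => T (H a x)).
Proof.
  intros HK HTo HTb HTw HTK Ea Hae.
  assert (HO : open (fun x => T (H a x))) by (apply open_preimage_act; assumption).
  split; [exact HO|].
  apply (elementary_of_sub_compact K); [exact HK | | |].
  - intros d Ed Hde x Tx. rewrite act_comm by auto. apply HTb; assumption.
  - exists (fun x => T (H a x)). split; [exact HO|]. split; [|auto].
    rewrite center_fixed by exact Ea. exact HTw.
  - intros x Tx. apply HTK. rewrite <- (actK a x) by exact Ea. apply HTb; assumption.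
Qed.

Lemma closure_preimage_shrinks K T V :
  compact_in open K -> (forall x, closure open T x -> K x) -> nbhd open omega V ->
  exists al, E al /\ forall a, E a -> a <= al ->
    forall x, closure open (fun z => T (H a z)) x -> V x.
Proof.
  intros HK HTK HV.
  destruct (ABS_uniform_on_compact K V HK HV) as [al [Eal Hal]].
  exists al. split; [exact Eal|]. intros a Ea Hle x Hx.
  rewrite <- (actK a x) by exact Ea.
  apply Hal; [exact Ea | exact Hle|].
  apply HTK. apply (closure_act a (fun z => T (H a z))); auto.
Qed.

Hypothesis Hlc : locally_compact open.
Hypothesis Hnontriv : exists c, E c /\ c <> e.

Lemma countable_elementary_bases :
  (exists T : nat -> (X -> Prop),
     (forall n, compact_in open (T n) /\ elementary E inv e open H omega (T n)) /\
     (forall V, nbhd open omega V -> exists n, forall x, T n x -> V x)) /\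
  (exists T : nat -> (X -> Prop),
     (forall n, open (T n) /\ elementary E inv e open H omega (T n)) /\
     (forall V, nbhd open omega V -> exists n, forall x, T n x -> V x)).
Proof.
  destruct (Hlc omega) as [K [HK HKw]].
  destruct (open_balanced_nbhd_sub K HKw) as [T (HTo & HTb & HTw & HTK)].
  assert (HclTK : forall x, closure open T x -> K x).
  { intros x Hx. apply (closure_compact open Htop K x Hhaus HK).
    apply (closure_mono open T); assumption. }
  destruct (coinitial_seq E (ex_intro _ e E_e) (no_least Hnontriv)) as [b [Eb Hb]].
  set (a n := Rmin (b n) e).
  assert (Ea : forall n, E (a n)) by (intros n; apply Rmin_case; auto).
  set (O n := fun x => T (H (a n) x)).
  assert (HO : forall n, open (O n) /\ elementary E inv e open H omega (O n)).
  { intros n. apply (preimage_open_elementary K); auto. apply Rmin_r. }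
  assert (Hbase : forall V, nbhd open omega V ->
            exists n, forall x, closure open (O n) x -> V x).
  { intros V HV. destruct (closure_preimage_shrinks K T V HK HclTK HV) as [al [Eal Hal]].
    destruct (Hb al Eal) as [n Hn]. exists n.
    apply Hal; [exact (Ea n)|]. pose proof (Rmin_l (b n) e). unfold a. lra. }
  split.
  - exists (fun n => closure open (O n)). split; [|exact Hbase].
    intros n. apply elementary_closure, HO.
  - exists O. split; [exact HO|].
    intros V HV. destruct (Hbase V HV) as [n Hn]. exists n.
    intros x Ox. apply Hn, (subset_closure open), Ox.
Qed.

End RGroupAction.

Theorem corollary2p4
  (E : R -> Prop) (mul : R -> R -> R) (inv : R -> R) (e : R)
  (HE : R_group E mul inv e)
  (X : Type) (open : (X -> Prop) -> Prop)
  (Htop : is_topology open) (Hhaus : hausdorff open) (Hlc : locally_compact open)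
  (Hnt : exists x y : X, x <> y)
  (H : R -> X -> X) (Hact : action E mul e H)
  (Hcont : continuous_action E open H)
  (omega : X) (Habs : ABS E inv open H omega) :
  (exists T : nat -> (X -> Prop),
     (forall n, compact_in open (T n) /\ elementary E inv e open H omega (T n)) /\
     (forall V, nbhd open omega V -> exists n, forall x, T n x -> V x)) /\
  (exists T : nat -> (X -> Prop),
     (forall n, open (T n) /\ elementary E inv e open H omega (T n)) /\
     (forall V, nbhd open omega V -> exists n, forall x, T n x -> V x)).
Proof.
  pose proof (R_group_nontrivial E mul inv e HE) as Hnontriv.
  destruct HE as [_ [G [Hord _]]].
  eapply countable_elementary_bases; eassumption.
Qed.
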